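(* Let $f(x)$ be a formal power series with zero constant term and positive coefficient of $x$. If the power series $x/f(x)=\sum_{n\ge0}c_nx^n$ is alternating, i.e. $(-1)^nc_n\ge0$ for all $n\ge0$, then the compositional inverse $f^{-1}(x)=\sum_{n\ge1}e_nx^n$ satisfies $(-1)^{n-1}e_n\ge0$ for all $n\ge1$.
   Context: The compositional inverse $f^{-1}(x)$ is the unique power series with zero constant term satisfying $f(f^{-1}(x))=f^{-1}(f(x))=x$. *)

(* Formal power series over a real field R are represented
   by their coefficient functions nat -> R (coefficient of x^n at index n). *)
From HB Require Import structures.
From mathcomp Require Import all_boot all_order all_algebra.
Set Implicit Arguments. Unset Strict Implicit. Unset Printing Implicit Defensive.
Import Order.TTheory GRing.Theory Num.Theory.
Local Open Scope ring_scope.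

Section FPS.
Variable R : comNzRingType.

Definition fps_one : nat -> R := fun n => (n == 0%N)%:R.
Definition fps_X : nat -> R := fun n => (n == 1%N)%:R.

Definition fps_mul (f g : nat -> R) : nat -> R :=
  fun n => \sum_(i < n.+1) f i * g (n - i)%N.

Fixpoint fps_pow (f : nat -> R) (k : nat) : nat -> R :=
  match k with
  | 0%N => fps_one
  | k'.+1 => fps_mul f (fps_pow f k')
  end.

(* composition f(g(x)), meaningful when g has zero constant term
   (then g^k has order >= k, so only k <= n contribute to coefficient n) *)
Definition fps_comp (f g : nat -> R) : nat -> R :=
  fun n => \sum_(k < n.+1) f k * fps_pow g k n.
End FPS.

(* Writing f(x) = x / c(x) and substituting x := e(x) in f(e(x)) = x gives the
   Lagrange-type fixed point equation e(x) = x c(e(x)), i.e.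
   e_(n+1) = [x^n] c(e(x)) = sum_k c_k [x^n] e(x)^k.
   If e_1, ..., e_n alternate as claimed, [x^n] e(x)^k has sign (-1)^(n+k),
   so every summand c_k [x^n] e(x)^k has sign (-1)^n, and so has e_(n+1). *)
From HB Require Import structures.
From mathcomp Require Import all_boot all_order all_algebra.
From mathcomp Require Import zify.
Import Order.TTheory GRing.Theory Num.Theory.
Set Implicit Arguments. Unset Strict Implicit.
Local Open Scope ring_scope.

Section Truncation.
Variable R : comNzRingType.
Implicit Types (f g : nat -> R) (P Q E : {poly R}).

Lemma fps_pow_coef_lt g k m :
  g 0%N = 0 -> (m < k)%N -> fps_pow g k m = 0.
Proof.
move=> g0; elim: k m => [|k IHk] m //= lt_mk.
rewrite /fps_mul big1 // => -[[|i] lt_im] _ /=; first by rewrite g0 mul0r.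
by rewrite IHk ?mulr0 //; rewrite ltnS in lt_mk lt_im; lia.
Qed.

Definition fps_trunc N f : {poly R} := \poly_(i < N.+1) f i.

Lemma coef_fps_trunc N f m : (m <= N)%N -> (fps_trunc N f)`_m = f m.
Proof. by move=> le_mN; rewrite coef_poly ltnS le_mN. Qed.

Lemma coef_fps_trunc_exp N g k m :
  (m <= N)%N -> (fps_trunc N g ^+ k)`_m = fps_pow g k m.
Proof.
elim: k m => [|k IHk] m le_mN /=; first by rewrite expr0 coef1.
rewrite exprS coefM; apply: eq_bigr => -[i lt_im] _ /=.
by rewrite coef_fps_trunc ?IHk //; rewrite ltnS in lt_im; lia.
Qed.

Lemma coef_fps_trunc_mul N f g m :
  (m <= N)%N -> (fps_trunc N f * fps_trunc N g)`_m = fps_mul f g m.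
Proof.
move=> le_mN; rewrite coefM; apply: eq_bigr => -[i lt_im] _ /=.
by rewrite !coef_fps_trunc //; rewrite ltnS in lt_im; lia.
Qed.

Lemma coef_fps_trunc_comp N f g m : g 0%N = 0 -> (m <= N)%N ->
  (fps_trunc N f \Po fps_trunc N g)`_m = fps_comp f g m.
Proof.
move=> g0 le_mN; set G := fps_trunc N g.
rewrite /fps_trunc poly_def (@linear_sum _ _ _ _ (comp_poly G)) coef_sum /fps_comp.
under eq_bigr => i _ do
  rewrite /= comp_polyZ comp_Xn_poly coefZ coef_fps_trunc_exp //.
rewrite -!(big_mkord xpredT (fun i => f i * fps_pow g i m)).
rewrite (big_cat_nat _ (n := m.+1)) //= [X in _ + X]big1_seq ?addr0 // => i.
by rewrite mem_index_iota => /andP[_ /andP[lt_mi _]]; rewrite fps_pow_coef_lt ?mulr0.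
Qed.

Definition eq_upto N P Q := forall m, (m <= N)%N -> P`_m = Q`_m.

Lemma eq_upto_mul N P P' Q Q' :
  eq_upto N P P' -> eq_upto N Q Q' -> eq_upto N (P * Q) (P' * Q').
Proof.
move=> eqP eqQ m le_mN; rewrite !coefM; apply: eq_bigr => -[i lt_im] _ /=.
by rewrite eqP ?eqQ //; rewrite ltnS in lt_im; lia.
Qed.

Lemma eq_upto_comp N P Q E :
  E`_0 = 0 -> eq_upto N P Q -> eq_upto N (P \Po E) (Q \Po E).
Proof.
move=> E0 eqPQ m le_mN; apply/eqP; rewrite -subr_eq0 -coefB -comp_polyB.
set D := P - Q.
have lowD : take_poly N.+1 D = 0.
  apply/polyP => i; rewrite coef_take_poly coef0 coefB.
  by case: ltnP => // lt_iN; rewrite eqPQ ?subrr.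
have lowE : take_poly 1 E = 0.
  by apply/polyP => -[|i]; rewrite coef_take_poly coef0.
(* D = x^(N+1) D' and E = x E', so D(E) = x^(N+1) D'(E) E'^(N+1). *)
rewrite -(poly_take_drop N.+1 D) lowD add0r comp_polyM comp_Xn_poly.
rewrite -(poly_take_drop 1 E) lowE add0r exprMn -exprM mul1n.
by rewrite mulrA mulrC coefXnM ltnS le_mN.
Qed.

Lemma fps_inverse_recursion f c e :
  fps_mul f c = fps_X R -> e 0%N = 0 -> fps_comp f e = fps_X R ->
  forall n, e n.+1 = fps_comp c e n.
Proof.
move=> hc e0 hfe n; set E := fps_trunc n.+1 e.
have E0 : E`_0 = 0 by rewrite coef_fps_trunc.
have fc_X : eq_upto n.+1 (fps_trunc n.+1 f * fps_trunc n.+1 c) 'X.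
  by move=> m le_m; rewrite coef_fps_trunc_mul // hc coefX.
have fE_X : eq_upto n.+1 (fps_trunc n.+1 f \Po E) 'X.
  by move=> m le_m; rewrite coef_fps_trunc_comp // hfe coefX.
have e_XcE : eq_upto n.+1 E ('X * (fps_trunc n.+1 c \Po E)).
  move=> m le_m; rewrite -[E in LHS]comp_polyX.
  rewrite -(eq_upto_comp E0 fc_X) // comp_polyM.
  exact: (eq_upto_mul fE_X (fun k _ => erefl)) m le_m.
by rewrite -(coef_fps_trunc e (leqnn n.+1)) -/E e_XcE // coefXM coef_fps_trunc_comp.
Qed.

End Truncation.

Section Signs.
Variable R : numDomainType.

Lemma signr_addnn n : (-1) ^+ (n + n) = 1 :> R.
Proof. by rewrite exprD -exprMn mulrNN mulr1 expr1n. Qed.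

Variables (e : nat -> R) (n : nat).
Hypothesis e0 : e 0%N = 0.
Hypothesis e_alt : forall j, (0 < j <= n)%N -> 0 <= (-1) ^+ j.-1 * e j.

Lemma fps_pow_alternating k m :
  (m <= n)%N -> 0 <= (-1) ^+ (m + k) * fps_pow e k m.
Proof.
elim: k m => [|k IHk] m le_mn /=.
  by rewrite /fps_one; case: m le_mn => [|m] _; rewrite ?mulr0 ?addn0 ?mulr1.
rewrite /fps_mul mulr_sumr; apply: sumr_ge0 => -[[|i] lt_im] _ /=.
  by rewrite e0 mul0r mulr0.
rewrite ltnS in lt_im.
have -> : (m + k.+1 = i + (m - i.+1 + k) + (1 + 1))%N by lia.
rewrite exprD signr_addnn mulr1 exprD mulrACA.
have le_i1n : (0 < i.+1 <= n)%N by lia.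
have e_i : 0 <= (-1) ^+ i * e i.+1 := e_alt le_i1n.
by rewrite mulr_ge0 // IHk //; lia.
Qed.

Lemma fps_comp_alternating c :
  (forall k, 0 <= (-1) ^+ k * c k) ->
  forall m, (m <= n)%N -> 0 <= (-1) ^+ m * fps_comp c e m.
Proof.
move=> c_alt m le_mn; rewrite /fps_comp mulr_sumr.
apply: sumr_ge0 => -[k _] _ /=.
have -> : (-1) ^+ m = (-1) ^+ k * (-1) ^+ (m + k) :> R.
  by rewrite -exprD addnCA exprD signr_addnn mulr1.
by rewrite mulrACA mulr_ge0 ?fps_pow_alternating.
Qed.

End Signs.

(* The recursion e = x c(e) already determines e. *)
Theorem claim6p1 (R : realFieldType) (f c e : nat -> R)
  (hf0 : f 0%N = 0) (hf1 : 0 < f 1%N)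
  (hc : fps_mul f c = fps_X R)
  (halt : forall n : nat, 0 <= (-1) ^+ n * c n)
  (he0 : e 0%N = 0)
  (hfe : fps_comp f e = fps_X R)
  (hef : fps_comp e f = fps_X R) :
  forall n : nat, (1 <= n)%N -> 0 <= (-1) ^+ n.-1 * e n.
Proof.
move=> n; elim/ltn_ind: n => -[//|n] IH _ /=.
rewrite (fps_inverse_recursion hc he0 hfe).
apply: (@fps_comp_alternating _ e n he0) => // j /andP[j_gt0 le_jn].
by apply: IH.
Qed.
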